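(* Let $K\subset\mathbb{R}^n$ be nonempty, convex, closed and bounded, let $C=\{x\in\mathbb{R}^m\mid Ax=b,\ x\ge0\}$ be nonempty and bounded, and let $f,h:\mathbb{R}^n\times\mathbb{R}^m\to\mathbb{R}$ be continuously differentiable functions such that, for every $y\in K$, $f(y,\cdot)$ and $h(y,\cdot)$ are convex, and such that $f$ takes only positive values. Let $y^*$ be an optimal solution of $(\widetilde{\mathcal{P}})$, let $x^*\in\widetilde{\mathcal{S}}(y^* )$, set $\alpha^*=h(y^*,x^* )$, $\beta^*=f(y^*,x^* )$ and $C^*=\{x\in C\mid h(y^*,x)\le\alpha^*,\ f(y^*,x)\le\beta^*\}$. Assume there exist $\varepsilon_0>0$ and $\delta>0$ such that for every $x\in C^*+\mathcal{B}(0,\varepsilon_0)$ there exists $\tilde x\in C^*$ with $$\|x-\tilde x\|^2\le\delta\Big[\big(h(y^*,x)-\alpha^*\big)^++\big(f(y^*,x)-\beta^*\big)^+\Big].$$ For every $\varepsilon>0$ let $y_\varepsilon$ be an optimal solution of $(\mathcal{P}_\varepsilon)$ and $x_\varepsilon\in\mathcal{S}_\varepsilon(y_\varepsilon)$. Then $f(y^*,x^* )-f(y_\varepsilon,x_\varepsilon)=o(\sqrt{\varepsilon})$ as $\varepsilon\to0$, and for every $\tau>0$, $f(y^*,x^* )-f(y_\varepsilon,x_\varepsilon)=o(\varepsilon^{1-\tau})$. Moreover, for every choice of $\tilde x_\varepsilon\in\mathcal{S}_\varepsilon(y^* )$ and every $\tau>0$, $h(y^*,\tilde x_\varepsilon)-h(y^*,x^*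 )=o(\varepsilon^{1-\tau})$ as $\varepsilon\to0$.
   Context: $f^2=(f)^2$; $t^+=\max\{t,0\}$; $\mathcal{B}(0,\varepsilon_0)$ is the open ball of radius $\varepsilon_0$ centred at $0$ in $\mathbb{R}^m$. For $y\in K$: $\mathcal{S}(y)=\operatorname{argmin}\{h(y,z)\mid z\in C\}$; for $\varepsilon>0$, $\mathcal{S}_\varepsilon(y)=\operatorname{argmin}\{h(y,z)+\varepsilon f^2(y,z)\mid z\in C\}$; $\widetilde{\mathcal{S}}(y)=\operatorname{argmin}\{f^2(y,z)\mid z\in\mathcal{S}(y)\}$. $(\mathcal{P}_\varepsilon)$: maximize $f(y,x)$ over $y\in K$, $x\in\mathcal{S}_\varepsilon(y)$; $y_\varepsilon\in K$ is optimal if $f(y_\varepsilon,x')\ge f(y,x)$ for all $x'\in\mathcal{S}_\varepsilon(y_\varepsilon)$, $y\in K$, $x\in\mathcal{S}_\varepsilon(y)$. $(\widetilde{\mathcal{P}})$: maximize $f(y,x)$ over $y\in K$, $x\in\widetilde{\mathcal{S}}(y)$; $y^*\in K$ is optimal if $f(y^*,x')\ge f(y,x)$ for all $x'\in\widetilde{\mathcal{S}}(y^* )$, $y\in K$, $x\in\widetilde{\mathcal{S}}(y)$. *)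

From HB Require Import structures.
From mathcomp Require Import all_boot all_order all_algebra.
From mathcomp Require Import all_classical all_reals all_analysis.
Set Implicit Arguments. Unset Strict Implicit. Unset Printing Implicit Defensive.
Import Order.TTheory GRing.Theory Num.Theory.
Import numFieldNormedType.Exports.
Local Open Scope classical_set_scope.
Local Open Scope ring_scope.

Section Defs.
Variable R : realType.

Definition sqnorm (k : nat) (v : 'rV[R]_k) : R := \sum_(i < k) (v 0 i) ^+ 2.
Definition enorm (k : nat) (v : 'rV[R]_k) : R := Num.sqrt (sqnorm v).

Definition pospart (t : R) : R := Num.max t 0.

Definition convex_set_rV (k : nat) (S : set 'rV[R]_k) : Prop :=
  forall x1 x2 (t : R), S x1 -> S x2 -> 0 <= t <= 1 ->
    S (t *: x1 + (1 - t) *: x2).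

Definition convex_fun_rV (k : nat) (g : 'rV[R]_k -> R) : Prop :=
  forall x1 x2 (t : R), 0 <= t <= 1 ->
    g (t *: x1 + (1 - t) *: x2) <= t * g x1 + (1 - t) * g x2.

(* continuously differentiable: Frechet differentiable everywhere, and the
   derivative p |-> 'd F p is continuous (in finite dimension, equivalently
   p |-> 'd F p v is continuous for every direction v) *)
Definition C1_fun (n m : nat) (F : 'rV[R]_n * 'rV[R]_m -> R) : Prop :=
  (forall p, differentiable F p) /\
  (forall v : 'rV[R]_n * 'rV[R]_m, continuous (fun p => 'd F p v)).

Definition argmin_on (k : nat) (g : 'rV[R]_k -> R) (D : set 'rV[R]_k)
  : set 'rV[R]_k := [set z | D z /\ forall z', D z' -> g z <= g z'].

Variables (n m : nat) (F H : 'rV[R]_n * 'rV[R]_m -> R)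
  (K : set 'rV[R]_n) (C : set 'rV[R]_m).

Definition Ssol (y : 'rV[R]_n) : set 'rV[R]_m := argmin_on (fun z => H (y, z)) C.
Definition Seps (eps : R) (y : 'rV[R]_n) : set 'rV[R]_m :=
  argmin_on (fun z => H (y, z) + eps * (F (y, z)) ^+ 2) C.
Definition Stilde (y : 'rV[R]_n) : set 'rV[R]_m :=
  argmin_on (fun z => (F (y, z)) ^+ 2) (Ssol y).

Definition opt_Peps (eps : R) (ye : 'rV[R]_n) : Prop :=
  K ye /\ forall x' y x, Seps eps ye x' -> K y -> Seps eps y x -> F (y, x) <= F (ye, x').
Definition opt_Ptilde (ys : 'rV[R]_n) : Prop :=
  K ys /\ forall x' y x, Stilde ys x' -> K y -> Stilde y x -> F (y, x) <= F (ys, x').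

End Defs.

From HB Require Import structures.
From mathcomp Require Import all_boot all_order all_algebra.
From mathcomp Require Import all_classical all_reals all_analysis.
From mathcomp Require Import ring lra.
Import Order.TTheory GRing.Theory Num.Theory.
Import numFieldNormedType.Exports.
Local Open Scope classical_set_scope.
Local Open Scope ring_scope.

(** Write [f = F (ys, .)] and [h = H (ys, .)]. A minimiser of [h + eps f^2] has no
    larger [f] than a minimiser of [h]; with optimality of [ys] this gives
    [F (yeps, xeps) <= F (ys, xs)], and optimality of [yeps] reduces the converse to
    bounding [d = f xs - f z] for [z] in [S_eps(ys)]. As [C] is bounded, for a fixed
    [t > 0] the point [x_t = t z + (1 - t) xs] is [eps0]-close to [C*] and, by
    convexity, violates its constraints only through
    [h x_t - h xs <= t eps (f xs^2 - f z^2) <= 2 t eps f xs d]. The error bound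
    yields [x^] in [C*] near [x_t]; since [x^] lies in [S(ys)], [f x^ >= f xs], and
    convexity of [f] with a bound on its derivative over the compact [C] gives
    [t d <= L |x_t - x^|]. Squaring, [(t d)^2 <= 2 L^2 delta t eps f xs d], so
    [d = O(eps)]. For [h], directly [h z - h xs <= eps f xs^2]. *)

Section EuclideanNorm.
Context {R : realType} {k : nat}.
Implicit Types (v : 'rV[R]_k) (t : R).

Lemma sqnorm_ge0 v : 0 <= sqnorm v.
Proof. by apply: sumr_ge0 => i _; exact: sqr_ge0. Qed.

Lemma sqr_enorm v : enorm v ^+ 2 = sqnorm v.
Proof. by rewrite sqr_sqrtr // sqnorm_ge0. Qed.

Lemma enormZ t v : 0 <= t -> enorm (t *: v) = t * enorm v.
Proof.
move=> t_ge0; rewrite /enorm /sqnorm.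
under eq_bigr do rewrite mxE exprMn.
by rewrite -mulr_sumr sqrtrM ?sqr_ge0 // sqrtr_sqr ger0_norm.
Qed.

Lemma entry_le_enorm v i : `|v 0 i| <= enorm v.
Proof.
rewrite -sqrtr_sqr ler_sqrt ?sqnorm_ge0 // /sqnorm (bigD1 i) //=.
by rewrite lerDl sumr_ge0 // => j _; exact: sqr_ge0.
Qed.

Lemma entry_le_mx_norm v i : `|v 0 i| <= `|v|.
Proof.
rewrite [leRHS]/Num.norm /= mx_normrE.
by apply/bigmax_geP; right; exists (0, i).
Qed.

Lemma enorm_le_mx_norm v : enorm v <= Num.sqrt k%:R * `|v|.
Proof.
rewrite -[`|v|]ger0_norm // -sqrtr_sqr -sqrtrM // ler_sqrt ?mulr_ge0 ?sqr_ge0 //.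
have entry_sqr_le i : v 0 i ^+ 2 <= `|v| ^+ 2.
  by rewrite -real_normK ?num_real // lerXn2r ?nnegrE // entry_le_mx_norm.
apply: le_trans (ler_sum _ (fun i _ => entry_sqr_le i)) _.
by rewrite sumr_const card_ord mulr_natl.
Qed.

End EuclideanNorm.

Lemma bounded_set_shrink {R : realType} {k : nat} {S : set 'rV[R]_k} {r : R} :
  bounded_set S -> 0 < r ->
  exists t, [/\ 0 < t, t <= 1 & forall x y, S x -> S y -> t * enorm (x - y) < r].
Proof.
move=> [M [_ M_bound]] r_gt0.
have S_le x : S x -> `|x| <= `|M| + 1.
  by apply: M_bound; have := ler_norm M; lra.
pose E := Num.sqrt k%:R * ((`|M| + 1) *+ 2).
have E_ge0 : 0 <= E by rewrite mulr_ge0 ?sqrtr_ge0 ?mulrn_wge0 ?addr_ge0.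
have diam_le x y : S x -> S y -> enorm (x - y) <= E.
  move=> Sx Sy; apply: le_trans (enorm_le_mx_norm _) _.
  rewrite ler_wpM2l ?sqrtr_ge0 //; apply: le_trans (ler_normB x y) _.
  by rewrite mulr2n lerD ?S_le.
have Er_gt0 : 0 < E + r by lra.
exists (r / (E + r)); split; first exact: divr_gt0.
  by rewrite ler_pdivrMr // mul1r; lra.
move=> x y Sx Sy; apply: le_lt_trans (ler_wpM2l _ (diam_le x y Sx Sy)) _.
  exact/ltW/divr_gt0.
by rewrite mulrAC ltr_pdivrMr // ltr_pM2l // ltrDl.
Qed.

Section StandardPolyhedron.
Context {R : realType} {m p : nat} (A : 'M[R]_(p, m)) (b : 'cV[R]_p).

Definition std_polyhedron : set 'rV[R]_m :=
  [set x | A *m x^T = b /\ forall i, 0 <= x 0 i].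

Lemma std_polyhedron_closed : closed std_polyhedron.
Proof.
have -> : std_polyhedron =
    \bigcap_j ((fun x => \sum_k A j k * x 0 k) @^-1` [set b j 0]) `&`
    \bigcap_i ((fun x => x 0 i) @^-1` [set r | 0 <= r]).
  apply/seteqP; split=> x [Ax_b x_ge0].
    split=> [j _ | i _] /=; last exact: x_ge0.
    have := congr1 (fun M : 'cV_p => M j 0) Ax_b; rewrite mxE => <-.
    by apply: eq_bigr => k _; rewrite mxE.
  split=> [|i]; last exact: x_ge0.
  apply/matrixP => j k; rewrite (ord1 k) -(Ax_b j I) mxE.
  by apply: eq_bigr => l _; rewrite mxE.
apply: closedI; apply: closed_bigI => j _; apply: preimage_closed.
- move=> x _; apply: (continuous_big (op := +%R)) => [|k _ y]; first exact: add_continuous.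
  by apply: (@cvgMl_tmp _ _ (nbhs y)); apply: coord_continuous.
- exact: closed_eq.
- by move=> x _; exact: coord_continuous.
- exact: closed_ge.
Qed.

End StandardPolyhedron.

Lemma continuous_slice {R : realType} {n m : nat} {T : topologicalType}
    {G : 'rV[R]_n * 'rV[R]_m -> T} (y : 'rV[R]_n) :
  continuous G -> continuous (fun z => G (y, z)).
Proof.
move=> cG z; apply: continuous_comp (cG (y, z)).
by apply: (@cvg_pair _ _ _ (nbhs z) (nbhs y) (nbhs z)); [exact: cvg_cst | exact: cvg_id].
Qed.

Section Argmin.
Context {R : realType} {k : nat}.
Implicit Types (D : set 'rV[R]_k) (g h : 'rV[R]_k -> R).

Lemma argmin_exists {D g} :
  D !=set0 -> compact D -> continuous g -> exists z, argmin_on g D z.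
Proof.
move=> D0 cD cg; have [z Dz z_min] := compact_EVT_min D0 cD (continuous_subspaceT cg).
by exists z; split=> [|z' Dz']; [exact: set_mem | exact/z_min/mem_set].
Qed.

Lemma argmin_sublevel {D h x} :
  argmin_on h D x -> argmin_on h D = D `&` [set z | h z <= h x].
Proof.
move=> [Dx x_min]; apply/seteqP; split=> z [Dz z_min]; split=> //=.
  exact: z_min.
by move=> z' Dz'; apply: le_trans z_min (x_min z' Dz').
Qed.

Lemma argmin_penalized_gap {D h g} {e : R} {z x} :
  argmin_on (fun z => h z + e * g z ^+ 2) D z -> argmin_on h D x ->
  0 <= h z - h x <= e * (g x ^+ 2 - g z ^+ 2).
Proof.
move=> [Dz z_min] [Dx x_min]; have := z_min x Dx; have := x_min z Dz.
rewrite subr_ge0 => -> /=; lra.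
Qed.

Lemma argmin_penalized_le {D h g} {e : R} {z x} :
  0 < e -> 0 <= g z -> 0 <= g x ->
  argmin_on (fun z => h z + e * g z ^+ 2) D z -> argmin_on h D x -> g z <= g x.
Proof.
move=> e_gt0 gz_ge0 gx_ge0 z_opt x_opt.
have /andP[gap_ge0 gap_le] := argmin_penalized_gap z_opt x_opt.
by rewrite -ler_sqr ?nnegrE // -subr_ge0 -(pmulr_rge0 _ e_gt0); lra.
Qed.

End Argmin.

Section Bilevel.
Context {R : realType} {n m : nat} {F H : 'rV[R]_n * 'rV[R]_m -> R}
  {K : set 'rV[R]_n} {C : set 'rV[R]_m}.
Hypotheses (C0 : C !=set0) (cC : compact C).
Hypotheses (cF : continuous F) (cH : continuous H) (F_gt0 : forall q, 0 < F q).

Lemma Seps_exists (e : R) (y : 'rV[R]_n) : exists z, Seps F H C e y z.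
Proof.
have cFy := continuous_slice y cF.
apply: argmin_exists => // z.
apply: (@continuousD _ _ _ (fun z => H (y, z))); first exact: continuous_slice.
apply: (@continuousM _ _ (fun=> e)); first exact: cst_continuous.
exact: (continuousM (cFy z) (cFy z)).
Qed.

Lemma Stilde_exists y : exists z, Stilde F H C y z.
Proof.
have [z0 z0_opt] := argmin_exists C0 cC (continuous_slice y cH).
apply: argmin_exists.
- by exists z0.
- rewrite /Ssol (argmin_sublevel z0_opt); apply: compact_closedI => //.
  apply: (@preimage_closed _ _ (fun z => H (y, z)) [set r | r <= H (y, z0)]).
    by move=> z _; exact: continuous_slice.
  exact: closed_le.
- have cFy := continuous_slice y cF.
  by move=> z; exact: (continuousM (cFy z) (cFy z)).
Qed.

Lemma Peps_value_le_Ptilde {e ys xs ye xe} :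
  0 < e -> opt_Ptilde F H K C ys -> Stilde F H C ys xs ->
  opt_Peps F H K C e ye -> Seps F H C e ye xe -> F (ye, xe) <= F (ys, xs).
Proof.
move=> e_gt0 [_ ys_opt] xs_opt [ye_K _] xe_opt.
have [x x_opt] := Stilde_exists ye.
apply: le_trans (ys_opt xs ye x xs_opt ye_K x_opt).
by apply: (argmin_penalized_le e_gt0 _ _ xe_opt x_opt.1); exact/ltW/F_gt0.
Qed.

Lemma Ptilde_value_gap_le {e c ys xs ye xe} :
  K ys -> opt_Peps F H K C e ye -> Seps F H C e ye xe ->
  (forall z, Seps F H C e ys z -> F (ys, xs) - F (ys, z) <= c) ->
  F (ys, xs) - F (ye, xe) <= c.
Proof.
move=> ys_K [_ ye_opt] xe_opt gap_le.
have [z z_opt] := Seps_exists e ys.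
by apply: le_trans (gap_le z z_opt); rewrite lerD2l lerN2 (ye_opt xe ys z).
Qed.

End Bilevel.

Lemma compact_continuous_norm_bounded {R : realType} {T : topologicalType}
    {C : set T} {g : T -> R} :
  compact C -> continuous g -> exists M, 0 <= M /\ forall x, C x -> `|g x| <= M.
Proof.
move=> cC cg.
have [M [_ M_bound]] := compact_bounded (continuous_compact (continuous_subspaceT cg) cC).
exists (`|M| + 1); split=> [|x Cx]; first by rewrite addr_ge0.
by apply: M_bound; [have := ler_norm M; lra | exists x].
Qed.

Section SliceDerivative.
Context {R : realType} {n k : nat} (F : 'rV[R]_n * 'rV[R]_k -> R) (y : 'rV[R]_n).

Lemma pair0_sum_delta (w : 'rV[R]_k) :
  ((0 : 'rV[R]_n), w) = \sum_i w 0 i *: ((0 : 'rV[R]_n), (delta_mx 0 i : 'rV[R]_k)).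
Proof.
rewrite {1}(row_sum_delta w); elim/big_rec2: _ => [//|i a b _ <-].
by rewrite [RHS]surjective_pairing /= scaler0 addr0.
Qed.

Lemma convex_slice_diff_le x w :
  differentiable F (y, x) -> convex_fun_rV (fun z => F (y, z)) ->
  'd F (y, x) (0, w) <= F (y, x + w) - F (y, x).
Proof.
move=> dF cvx; have dv := @diff_derivable _ _ _ F (y, x) (0, w) dF.
rewrite -deriveE // /derive (cvg_at_rightE _ _ dv).
apply: limr_le; first exact: (cvgP _ (cvg_dnbhs_at_right dv)).
near=> h; have h_gt0 : 0 < h by near: h; exact: nbhs_right_gt.
have h_le1 : h <= 1 by near: h; exact: nbhs_right_ltW.
rewrite /=; have -> : h *: ((0 : 'rV[R]_n), w) + (y, x) = (y, h *: (x + w) + (1 - h) *: x).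
  rewrite [LHS]surjective_pairing /= scaler0 add0r; congr pair.
  by apply/rowP => j; rewrite !mxE; ring.
have := cvx (x + w) x h; rewrite h_le1 ltW //= => /(_ isT) cvx_h.
rewrite -[h^-1 *: _]/(h^-1 * _) mulrC ler_pdivrMr //; nra.
Unshelve. all: by end_near. Qed.

Lemma diff_slice_bounded {C : set 'rV[R]_k} :
  compact C -> (forall v, continuous (fun p => 'd F p v)) ->
  exists L, 0 <= L /\ forall x w, C x -> `|'d F (y, x) (0, w)| <= L * enorm w.
Proof.
move=> cC cdF.
have /choice [L L_bound] : forall i : 'I_k, exists Li, 0 <= Li /\
    forall x, C x -> `|'d F (y, x) (0, delta_mx 0 i)| <= Li.
  by move=> i; exact: compact_continuous_norm_bounded cC (continuous_slice y (cdF _)).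
exists (\sum_i L i); split=> [|x w Cx]; first by apply: sumr_ge0 => i _; case: (L_bound i).
rewrite (pair0_sum_delta w) linear_sum mulr_suml.
apply: le_trans (ler_norm_sum _ _ _) _; apply: ler_sum => i _.
rewrite linearZ normrM mulrC ler_pM ?normr_ge0 ?entry_le_enorm //.
exact: (L_bound i).2.
Qed.

Lemma convex_slice_lipschitz_below {C : set 'rV[R]_k} :
  C1_fun F -> compact C -> convex_fun_rV (fun z => F (y, z)) ->
  exists L, 0 <= L /\ forall z w, C z -> F (y, z) - F (y, z + w) <= L * enorm w.
Proof.
move=> [dF cdF] cC cvx; have [L [L_ge0 L_bound]] := diff_slice_bounded cC cdF.
exists L; split=> // z w Cz; have := convex_slice_diff_le z w (dF _) cvx.
by have := L_bound z w Cz; rewrite ler_norml => /andP[? _]; lra.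
Qed.

End SliceDerivative.

Lemma ler_of_sqr_le_mul {R : realDomainType} (a b : R) :
  0 <= b -> a ^+ 2 <= a * b -> a <= b.
Proof. by move=> b_ge0 sq_le; nra. Qed.

Section ErrorBoundRate.
Context {R : realType} {m : nat} {C : set 'rV[R]_m} {f h : 'rV[R]_m -> R}
  {xs : 'rV[R]_m} {eps0 delta t L : R}.
Hypotheses (cvx_f : convex_fun_rV f) (cvx_h : convex_fun_rV h)
  (f_gt0 : forall z, 0 < f z).
Hypothesis xs_opt : argmin_on (fun z => f z ^+ 2) (argmin_on h C) xs.
Hypothesis error_bound : forall x,
  (exists c, [set x | C x /\ h x <= h xs /\ f x <= f xs] c /\ enorm (x - c) < eps0) ->
  exists xt, [set x | C x /\ h x <= h xs /\ f x <= f xs] xt /\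
    sqnorm (x - xt) <= delta * (pospart (h x - h xs) + pospart (f x - f xs)).
Hypotheses (delta_gt0 : 0 < delta) (t_gt0 : 0 < t) (t_le1 : t <= 1) (L_ge0 : 0 <= L).
Hypothesis t_shrinks : forall z, C z -> t * enorm (z - xs) < eps0.
Hypothesis f_lipschitz_below : forall z w, C z -> f z - f (z + w) <= L * enorm w.

Lemma sublevel_f_ge z : C z -> h z <= h xs -> f xs <= f z.
Proof.
move=> Cz hz_le; rewrite -ler_sqr ?nnegrE ?(ltW (f_gt0 _)) //; apply: (proj2 xs_opt z).
by rewrite (argmin_sublevel xs_opt.1).
Qed.

Lemma penalized_gap_sqr_le {e z} :
  0 < e -> argmin_on (fun z => h z + e * f z ^+ 2) C z ->
  (t * (f xs - f z)) ^+ 2 <= L ^+ 2 * delta * (t * e) * (f xs ^+ 2 - f z ^+ 2).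
Proof.
move=> e_gt0 z_opt; have [Cz _] := z_opt; have xs_min := xs_opt.1.
have /andP[_ hz_le] := argmin_penalized_gap z_opt xs_min.
have fz_le : f z <= f xs.
  exact: argmin_penalized_le e_gt0 (ltW (f_gt0 z)) (ltW (f_gt0 xs)) z_opt xs_min.
have t01 : 0 <= t <= 1 by rewrite t_le1 ltW.
pose xt := t *: z + (1 - t) *: xs.
have cvx_h_xt : h xt <= t * h z + (1 - t) * h xs := cvx_h z xs t t01.
have cvx_f_xt : f xt <= t * f z + (1 - t) * f xs := cvx_f z xs t t01.
have xt_near : enorm (xt - xs) < eps0.
  have -> : xt - xs = t *: (z - xs) by apply/rowP => j; rewrite !mxE; ring.
  by rewrite enormZ ?(ltW t_gt0) // t_shrinks.
have xs_level : [set x | C x /\ h x <= h xs /\ f x <= f xs] xs.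
  by split; [exact: xs_min.1 | split].
have [xh [[Cxh [hxh _]] xh_close]] := error_bound xt (ex_intro _ xs (conj xs_level xt_near)).
have violation : pospart (h xt - h xs) + pospart (f xt - f xs)
    <= t * e * (f xs ^+ 2 - f z ^+ 2).
  have h_viol : pospart (h xt - h xs) <= t * e * (f xs ^+ 2 - f z ^+ 2).
    rewrite /pospart ge_max; apply/andP; split; first nra.
    apply: mulr_ge0; first exact: mulr_ge0 (ltW t_gt0) (ltW e_gt0).
    by rewrite subr_ge0 ler_sqr ?nnegrE ?(ltW (f_gt0 _)).
  have f_viol : pospart (f xt - f xs) <= 0 by rewrite /pospart ge_max lexx andbT; nra.
  lra.
have tgap_le : t * (f xs - f z) <= L * enorm (xt - xh).
  have := f_lipschitz_below xh (xt - xh) Cxh; rewrite [xh + _]addrC subrK.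
  have := sublevel_f_ge xh Cxh hxh; nra.
have tgap_ge0 : 0 <= t * (f xs - f z).
  by apply: mulr_ge0 (ltW t_gt0) _; rewrite subr_ge0.
have LN_ge0 : 0 <= L * enorm (xt - xh) := mulr_ge0 L_ge0 (sqrtr_ge0 _).
apply: (@le_trans _ _ ((L * enorm (xt - xh)) ^+ 2)); first by rewrite ler_sqr ?nnegrE.
rewrite exprMn sqr_enorm.
rewrite [leRHS](_ : _ = L ^+ 2 * (delta * (t * e * (f xs ^+ 2 - f z ^+ 2)))); last by ring.
rewrite ler_wpM2l ?sqr_ge0 //; apply: le_trans xh_close _.
by rewrite ler_pM2l.
Qed.

Lemma penalized_gap_linear {e z} :
  0 < e -> argmin_on (fun z => h z + e * f z ^+ 2) C z ->
  f xs - f z <= 2 * L ^+ 2 * delta * f xs / t * e.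
Proof.
move=> e_gt0 z_opt; have gap_sqr := penalized_gap_sqr_le e_gt0 z_opt.
have sqr_gap : f xs ^+ 2 - f z ^+ 2 <= (f xs - f z) * (2 * f xs).
  have := argmin_penalized_le e_gt0 (ltW (f_gt0 z)) (ltW (f_gt0 xs)) z_opt xs_opt.1.
  by have := f_gt0 z; nra.
rewrite -(ler_pM2l t_gt0) [t * (_ * e)]mulrA mulrCA divff ?gt_eqF // mulr1.
apply: ler_of_sqr_le_mul.
  have := mulr_gt0 (mulr_gt0 delta_gt0 (f_gt0 xs)) e_gt0; have := sqr_ge0 L; nra.
apply: le_trans gap_sqr _.
have Ldte_ge0 : 0 <= L ^+ 2 * delta * (t * e).
  by rewrite !mulr_ge0 ?sqr_ge0 ?(ltW delta_gt0) ?(ltW t_gt0) ?(ltW e_gt0).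
rewrite [leRHS](_ : _ = L ^+ 2 * delta * (t * e) * ((f xs - f z) * (2 * f xs))); last by ring.
exact: ler_wpM2l.
Qed.

End ErrorBoundRate.

Section LittleO.
Context {R : realType}.

Lemma cvg_linear_bound_div_powR {u : R -> R} {c tau : R} :
  0 < tau -> (forall e, 0 < e -> 0 <= u e <= c * e) ->
  (fun e => u e / e `^ (1 - tau)) @ 0^'+ --> 0.
Proof.
move=> tau_gt0 u_bound.
have c_pow : (fun e => c * e `^ tau) @ 0^'+ --> 0.
  by rewrite -[X in _ --> X](mulr0 c); apply: cvgMl_tmp; exact: powR_cvg0.
apply: (squeeze_cvgr _ (cvg_cst 0) c_pow); near=> e.
have e_gt0 : 0 < e by near: e; exact: nbhs_right_gt.
have /andP[u_ge0 u_le] := u_bound e e_gt0.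
have pow_gt0 : 0 < e `^ (1 - tau) by apply: powR_gt0.
rewrite divr_ge0 ?(ltW pow_gt0) //= ler_pdivrMr // -mulrA -powRD; last first.
  by apply/implyP => _; exact: lt0r_neq0.
by rewrite addrC subrK (powRr1 (ltW e_gt0)).
Unshelve. all: by end_near. Qed.

Lemma cvg_linear_bound_div_sqrt {u : R -> R} {c : R} :
  (forall e, 0 < e -> 0 <= u e <= c * e) ->
  (fun e => u e / Num.sqrt e) @ 0^'+ --> 0.
Proof.
move=> u_bound; have half_gt0 : (0 : R) < 2^-1 by [].
apply: (cvg_trans _ (cvg_linear_bound_div_powR half_gt0 u_bound)); apply: near_eq_cvg.
near=> e; have e_gt0 : 0 < e by near: e; exact: nbhs_right_gt.
have -> : (1 - 2^-1 : R) = 2^-1 by field.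
by rewrite powR12_sqrt ?ltW.
Unshelve. all: by end_near. Qed.

End LittleO.

Theorem theorem4p2 (R : realType) (n m p : nat)
  (K : set 'rV[R]_n) (A : 'M[R]_(p, m)) (b : 'cV[R]_p)
  (F H : 'rV[R]_n * 'rV[R]_m -> R)
  (ys : 'rV[R]_n) (xs : 'rV[R]_m) (eps0 delta : R)
  (yeps : R -> 'rV[R]_n) (xeps : R -> 'rV[R]_m) :
  let C : set 'rV[R]_m := [set x | A *m x^T = b /\ forall i, 0 <= x 0 i] in
  K !=set0 -> convex_set_rV K -> closed K -> bounded_set K ->
  C !=set0 -> bounded_set C ->
  C1_fun F -> C1_fun H ->
  (forall y, K y -> convex_fun_rV (fun x => F (y, x)) /\ convex_fun_rV (fun x => H (y, x))) ->
  (forall q, 0 < F q) ->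
  opt_Ptilde F H K C ys ->
  Stilde F H C ys xs ->
  let alphas := H (ys, xs) in
  let betas := F (ys, xs) in
  let Cs : set 'rV[R]_m := [set x | C x /\ H (ys, x) <= alphas /\ F (ys, x) <= betas] in
  0 < eps0 -> 0 < delta ->
  (forall x, (exists c, Cs c /\ enorm (x - c) < eps0) ->
     exists xt, Cs xt /\
       sqnorm (x - xt) <= delta * (pospart (H (ys, x) - alphas) + pospart (F (ys, x) - betas))) ->
  (forall e, 0 < e -> opt_Peps F H K C e (yeps e) /\ Seps F H C e (yeps e) (xeps e)) ->
  [/\ (fun e => (F (ys, xs) - F (yeps e, xeps e)) / Num.sqrt e) @ 0^'+ --> 0,
      (forall tau, 0 < tau ->
         (fun e => (F (ys, xs) - F (yeps e, xeps e)) / e `^ (1 - tau)) @ 0^'+ --> 0) &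
      (forall xt : R -> 'rV[R]_m, (forall e, 0 < e -> Seps F H C e ys (xt e)) ->
       forall tau, 0 < tau ->
         (fun e => (H (ys, xt e) - H (ys, xs)) / e `^ (1 - tau)) @ 0^'+ --> 0)].
Proof.
move=> C _ _ _ _ C0 bC F_C1 H_C1 cvx_FH F_gt0 ys_opt xs_opt alphas betas Cs
  eps0_gt0 delta_gt0 error_bound eps_opt.
have cC : compact C := bounded_closed_compact bC (std_polyhedron_closed A b).
have cF : continuous F := fun q => differentiable_continuous (F_C1.1 q).
have cH : continuous H := fun q => differentiable_continuous (H_C1.1 q).
have [cvx_F cvx_H] := cvx_FH ys ys_opt.1.
have [t [t_gt0 t_le1 t_shrinks]] := bounded_set_shrink bC eps0_gt0.
have [L [L_ge0 F_lipschitz]] := convex_slice_lipschitz_below F ys F_C1 cC cvx_F.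
have gap e : 0 < e -> 0 <= F (ys, xs) - F (yeps e, xeps e)
    <= 2 * L ^+ 2 * delta * F (ys, xs) / t * e.
  move=> e_gt0; have [ye_opt xe_opt] := eps_opt e e_gt0.
  rewrite subr_ge0.
  rewrite (Peps_value_le_Ptilde C0 cC cF cH F_gt0 e_gt0 ys_opt xs_opt ye_opt xe_opt) /=.
  apply: (Ptilde_value_gap_le C0 cC cF cH ys_opt.1 ye_opt xe_opt) => z z_opt.
  apply: (penalized_gap_linear cvx_F cvx_H (fun z => F_gt0 (ys, z)) xs_opt error_bound
    delta_gt0 t_gt0 t_le1 L_ge0 (fun z Cz => t_shrinks z xs Cz xs_opt.1.1) F_lipschitz
    e_gt0 z_opt).
split.
- by apply: cvg_linear_bound_div_sqrt; exact: gap.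
- by move=> tau tau_gt0; apply: (cvg_linear_bound_div_powR tau_gt0); exact: gap.
- move=> xt xt_opt tau tau_gt0.
  apply: (cvg_linear_bound_div_powR (c := F (ys, xs) ^+ 2) tau_gt0) => e e_gt0.
  have /andP[-> gap_le] := argmin_penalized_gap (xt_opt e e_gt0) xs_opt.1.
  by have := sqr_ge0 (F (ys, xt e)); rewrite /=; nra.
Qed.
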